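(* Let $n\ge3$ and $G=C_n\Box P_2$ (the $n$-prism, with $2n$ vertices). Then $$3+\sqrt{3(2n-1)(2n-3)}\ >\ E(G)=QE(G)\ \ge\ \begin{cases}2n & \text{if } n\equiv0\pmod3,\\[4pt] 6n\cdot\dfrac{\sqrt{2\cos\big(\frac{2\pi\lfloor n/6\rfloor}{n}\big)-1}}{1+\cos\big(\frac{2\pi\lfloor n/6\rfloor}{n}\big)} & \text{if } n\equiv1\text{ or }2\pmod 6,\\[10pt] 6n\cdot\dfrac{\sqrt{1-2\cos\big(\frac{2\pi\lceil n/6\rceil}{n}\big)}}{2-\cos\big(\frac{2\pi\lceil n/6\rceil}{n}\big)} & \text{if } n\equiv4\text{ or }5\pmod6,\end{cases}$$ and equality holds in the right-hand (lower) inequality if and only if $n=4$, i.e. $G=C_4\Box P_2$.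
   Context: All graphs are finite, simple and undirected. $C_n$ is the cycle on $n$ vertices, $P_2=K_2$, and $\Box$ is the Cartesian product of graphs. For a graph $G$ with $N$ vertices and $m$ edges, let $q_1\ge\cdots\ge q_N\ge0$ be the eigenvalues of the signless Laplacian $Q(G)=D(G)+A(G)$ (degree diagonal matrix plus adjacency matrix). The signless Laplacian energy is $QE(G)=\sum_{i=1}^N|q_i-\frac{2m}{N}|$, and the energy is $E(G)=\sum_i|\lambda_i|$ over the eigenvalues $\lambda_i$ of the adjacency matrix. *)

From HB Require Import structures.
From mathcomp Require Import all_boot all_order all_algebra.
From mathcomp Require Import reals trigo.
From mathcomp Require Import complex.
Set Implicit Arguments. Unset Strict Implicit. Unset Printing Implicit Defensive.
Import Order.TTheory GRing.Theory Num.Theory.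
Local Open Scope ring_scope.

Definition cycle_rel (n : nat) : rel 'I_n :=
  fun i j => (val j == (val i).+1 %% n)%N || (val i == (val j).+1 %% n)%N.

Arguments cycle_rel n : clear implicits.

Definition P2_rel : rel 'I_2 := fun a b => a != b.

Definition cart_rel (T1 T2 : finType) (e1 : rel T1) (e2 : rel T2) : rel (T1 * T2)%type :=
  fun u v => ((u.1 == v.1) && e2 u.2 v.2) || ((u.2 == v.2) && e1 u.1 v.1).

Definition prism_rel (n : nat) : rel ('I_n * 'I_2)%type := cart_rel (cycle_rel n) P2_rel.
Arguments prism_rel n : clear implicits.

Section GraphMatrices.
Variables (R : realType) (T : finType) (e : rel T).

Definition adjmx : 'M[R]_#|T| :=
  \matrix_(i, j) (e (enum_val i) (enum_val j))%:R.

Definition deg (x : T) : nat := #|[set y | e x y]|.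

Definition degmx : 'M[R]_#|T| := \matrix_(i, j) ((deg (enum_val i))%:R *+ (i == j)).

Definition signlessmx : 'M[R]_#|T| := degmx + adjmx.

(* number of edges m (each edge of a symmetric irreflexive relation is counted
   twice among ordered pairs) *)
Definition nedges : nat := #|[set p : (T * T)%type | e p.1 p.2]| %/ 2.

End GraphMatrices.

(* The eigenvalues of a real square matrix, with multiplicity, as the roots
   of its characteristic polynomial in the algebraic closure R[i] of R. *)
Definition eigenvalues (R : realType) (N : nat) (A : 'M[R]_N) : seq R[i] :=
  sval (closed_field_poly_normal (char_poly (map_mx (@real_complex R) A))).

Definition energy (R : realType) (T : finType) (e : rel T) : R :=
  \sum_(z <- eigenvalues (adjmx R e)) Normc.normc z.

Definition QEnergy (R : realType) (T : finType) (e : rel T) : R :=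
  \sum_(z <- eigenvalues (signlessmx R e))
     Normc.normc (z - ((2 * nedges e)%N%:R / (#|T|)%:R)%:C%C).

Definition prism_lower_bound (R : realType) (n : nat) : R :=
  if (n %% 3 == 0)%N then (2 * n)%N%:R
  else if (n %% 6 == 1)%N || (n %% 6 == 2)%N then
    let c := cos (2 * pi * (n %/ 6)%N%:R / n%:R) in
    (6 * n)%N%:R * (Num.sqrt (2 * c - 1) / (1 + c))
  else (* n = 4 or 5 mod 6 ; ceil(n/6) = (n+5) %/ 6 *)
    let c := cos (2 * pi * ((n + 5) %/ 6)%N%:R / n%:R) in
    (6 * n)%N%:R * (Num.sqrt (1 - 2 * c) / (2 - c)).

(* The prism is a Cayley graph of Z_n x Z_2, so its adjacency matrix A is
   diagonalised by the characters F_(k,s)(j,b) = omega^(jk) (-1)^(bs),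
   omega = exp(2 i pi / n), with eigenvalues 2 cos (2 pi k / n) + (-1)^s.
   The prism is 3-regular with 3n edges on 2n vertices, so Q = 3 I + A and
   2m/N = 3: both energies equal
       E_n = sum_(k < n) ( |2 c_k + 1| + |2 c_k - 1| ),  c_k = cos (2 pi k / n). *)

From HB Require Import structures.
From mathcomp Require Import all_boot all_order all_algebra.
From mathcomp Require Import reals trigo complex.
From mathcomp Require Import ring lra zify.
Set Implicit Arguments. Unset Strict Implicit. Unset Printing Implicit Defensive.
Import Order.TTheory GRing.Theory Num.Theory.
Local Open Scope ring_scope.

Section CosineFacts.
Variable R : realType.

Lemma cos_lt1 (x : R) : 0 < x <= pi -> cos x < 1.
Proof.
case/andP=> x_gt0 x_le_pi; rewrite -cos0 ltr_cos ?in_itv /= ?lexx ?pi_ge0 //.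
by rewrite (ltW x_gt0).
Qed.

Lemma cos_2piB (x : R) : cos (pi *+ 2 - x) = cos x.
Proof. by rewrite addrC cosD2pi cosN. Qed.

Lemma cos_antitone (x y : R) : 0 <= x -> x <= y -> y <= pi -> cos y <= cos x.
Proof.
move=> x_ge0 xy y_le_pi.
have x_le_pi := le_trans xy y_le_pi; have y_ge0 := le_trans x_ge0 xy.
by rewrite leNgt ltr_cos ?in_itv /= ?x_ge0 ?y_ge0 ?x_le_pi ?y_le_pi // -leNgt.
Qed.

Lemma cos3x (x : R) : cos (x *+ 3) = 4 * cos x ^+ 3 - 3 * cos x.
Proof.
rewrite mulrS addrC cosD cos_mulr2n sin_mulr2n.
have sin2 : sin x ^+ 2 = 1 - cos x ^+ 2 by have := cos2Dsin2 x; lra.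
rewrite (_ : (cos x * sin x) *+ 2 * sin x = (sin x ^+ 2 * cos x) *+ 2); last by ring.
by rewrite sin2; ring.
Qed.

Lemma cos4x (x : R) : cos (x *+ 4) = 2 * (2 * cos x ^+ 2 - 1) ^+ 2 - 1.
Proof. by rewrite (_ : x *+ 4 = (x *+ 2) *+ 2) ?cos_mulr2n -?mulrnA //; ring. Qed.

End CosineFacts.

Section RootsOfUnity.
Variables (R : realType) (n : nat).
Hypothesis n_gt0 : (0 < n)%N.

Definition angle : R := 2 * pi / n%:R.

Definition omega (m : nat) : R[i] :=
  Complex (cos (m%:R * angle)) (sin (m%:R * angle)).

Lemma mul_Complex (a b c d : R) :
  Complex a b * Complex c d = Complex (a * c - b * d) (a * d + b * c).
Proof. by []. Qed.

Lemma omegaD (m1 m2 : nat) : omega (m1 + m2) = omega m1 * omega m2.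
Proof. by rewrite /omega natrD mulrDl cosD sinD mul_Complex; congr Complex; ring. Qed.

Lemma omega0 : omega 0 = 1.
Proof. by rewrite /omega mul0r cos0 sin0. Qed.

Lemma natr_n_neq0 : (n%:R : R) != 0.
Proof. by rewrite pnatr_eq0 -lt0n. Qed.

Lemma omega_n : omega n = 1.
Proof.
rewrite /omega (_ : n%:R * angle = pi *+ 2) ?cos2pi ?sin2pi //.
by rewrite /angle -mulr_natr; field; exact: natr_n_neq0.
Qed.

Lemma omegaMn (q : nat) : omega (q * n) = 1.
Proof. by elim: q => [|q IH]; rewrite ?omega0 // mulSn omegaD omega_n IH mulr1. Qed.

Lemma omega_mod (m : nat) : omega (m %% n) = omega m.
Proof. by rewrite {2}(divn_eq m n) omegaD omegaMn mul1r. Qed.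

Lemma omega_modl (m k : nat) : omega ((m %% n) * k) = omega (m * k).
Proof. by rewrite -omega_mod modnMml omega_mod. Qed.

Lemma omegaX (m j : nat) : omega m ^+ j = omega (m * j).
Proof.
elim: j => [|j IH]; first by rewrite muln0 omega0.
by rewrite exprS IH mulnS omegaD.
Qed.

(* exp(i t) <> 1 for 0 < t < 2 pi, since cos t < 1 there *)
Lemma omega_neq1 (d : nat) : (0 < d < n)%N -> omega d != 1.
Proof.
move=> /andP[d_gt0 d_lt_n]; apply/negP => /eqP [cos1 _].
set t := d%:R * angle in cos1.
have t_gt0 : 0 < t.
  by rewrite mulr_gt0 ?ltr0n // divr_gt0 ?mulr_gt0 ?pi_gt0 ?ltr0n.
have t_lt_2pi : t < pi *+ 2.
  have dn : (d%:R : R) < n%:R by rewrite ltr_nat.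
  have n0 : (0 : R) < n%:R by rewrite ltr0n.
  have p0 := @pi_gt0 R.
  rewrite /t /angle mulrA ltr_pdivrMr // -mulr_natr; nra.
have [t_le_pi|pi_lt_t] := lerP t pi.
  by have := @cos_lt1 R t; rewrite cos1 ltxx t_gt0 t_le_pi => /(_ isT).
suff : 0 < pi *+ 2 - t <= pi by move/cos_lt1; rewrite cos_2piB cos1 ltxx.
by rewrite subr_gt0 t_lt_2pi /= lerBlDr mulr2n lerD2l ltW.
Qed.

Lemma sum_omega (d : nat) :
  \sum_(j < n) omega (j * d) = if (n %| d)%N then n%:R else 0.
Proof.
case: ifP => [/dvdnP[q ->]|nd].
  rewrite (eq_bigr (fun _ => 1)) ?sumr_const ?card_ord // => j _.
  by rewrite mulnA omegaMn.
have neq1 : omega d != 1.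
  by rewrite -omega_mod omega_neq1 // ltn_mod n_gt0 andbT lt0n; move: nd; rewrite /dvdn => ->.
have : (omega d - 1) * \sum_(j < n) omega d ^+ j = 0.
  by rewrite -subrX1 omegaX omegaMn subrr.
move/eqP; rewrite mulf_eq0 subr_eq0 (negbTE neq1) /= => /eqP {2}<-.
by apply: eq_bigr => j _; rewrite omegaX mulnC.
Qed.

Lemma omega_conj (k : nat) :
  omega ((n - 1) * k) = Complex (cos (k%:R * angle)) (- sin (k%:R * angle)).
Proof.
rewrite /omega (_ : _ * angle = - (k%:R * angle) + (pi *+ 2) *+ k); last first.
  rewrite -mulrnA -mulr_natr !natrM natrB // /angle; field; exact: natr_n_neq0.
by rewrite (periodicn (@cosD2pi R)) (periodicn (@sinD2pi R)) cosN sinN.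
Qed.

Lemma omega_add_conj (k : nat) :
  omega k + omega ((n - 1) * k) = (2 * cos (k%:R * angle))%:C%C.
Proof. by rewrite omega_conj /omega; congr Complex; rewrite /= ?subrr; ring. Qed.

End RootsOfUnity.

Lemma char_poly_diagonalizable (F : idomainType) (N : nat) (M V : 'M[F]_N)
    (d : 'I_N -> F) :
  \det V != 0 -> M *m V = V *m diag_mx (\row_j d j) ->
  char_poly M = \prod_j ('X - (d j)%:P).
Proof.
move=> detV MV; set D := diag_mx (\row_j d j).
have -> : \prod_j ('X - (d j)%:P) = char_poly D.
  rewrite char_poly_trig ?diag_mx_is_trig //.
  by apply: eq_bigr => j _; rewrite !mxE eqxx mulr1n.
set VP := map_mx polyC V.
have conj_char : char_poly_mx M *m VP = VP *m char_poly_mx D.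
  by rewrite /char_poly_mx mulmxBl mulmxBr mul_scalar_mx mul_mx_scalar -!map_mxM MV.
have detVP : \det VP != 0 by rewrite det_map_mx polyC_eq0.
by apply: (mulIf detVP); rewrite /char_poly -det_mulmx conj_char det_mulmx mulrC.
Qed.

Lemma sum_eigenvalues (R : realType) (N : nat) (M : 'M[R]_N) (V : 'M[R[i]]_N) (d : 'I_N -> R[i])
    (f : R[i] -> R) :
  \det V != 0 -> map_mx (real_complex R) M *m V = V *m diag_mx (\row_j d j) ->
  \sum_(z <- eigenvalues M) f z = \sum_j f (d j).
Proof.
move=> detV MV; rewrite /eigenvalues; case: closed_field_poly_normal => s /=.
rewrite (char_poly_diagonalizable detV MV).
have /monicP -> : \prod_j ('X - (d j)%:P) \is monic by rewrite monic_prod_XsubC.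
rewrite scale1r => ds.
have perm_ds : perm_eq (map d (index_enum 'I_N)) s.
  by apply: prod_XsubC_eq; rewrite big_map -ds.
by rewrite -(perm_big _ perm_ds) big_map.
Qed.

Lemma sum_pairs (V : nmodType) (I J : finType) (G : I * J -> V) :
  \sum_z G z = \sum_i \sum_j G (i, j).
Proof. by rewrite pair_bigA; apply: eq_bigr => -[]. Qed.

Lemma sum_enum_val (V : nmodType) (T : finType) (G : T -> V) :
  \sum_(k < #|T|) G (enum_val k) = \sum_z G z.
Proof. by rewrite -(big_enum_val (A := predT)). Qed.

Lemma sum_indicator (V : pzRingType) (I : finType) (i0 : I) (G : I -> V) :
  \sum_i (i0 == i)%:R * G i = G i0.
Proof.
rewrite (bigD1 i0) //= eqxx mul1r big1 ?addr0 // => i.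
by rewrite eq_sym => /negbTE ->; rewrite mul0r.
Qed.

Lemma natr_orb (V : pzSemiRingType) (p q : bool) :
  ~~ (p && q) -> ((p || q)%:R : V) = p%:R + q%:R.
Proof. by case: p; case: q; rewrite ?addr0 ?add0r. Qed.

Lemma natr_andb (V : pzSemiRingType) (p q : bool) :
  ((p && q)%:R : V) = p%:R * q%:R.
Proof. by case: p; case: q; rewrite ?mulr1 ?mulr0. Qed.

Lemma modn_succ (n a : nat) : (a < n)%N ->
  (a.+1 %% n = if (a.+1 < n)%N then a.+1 else 0)%N.
Proof.
move=> a_lt_n; case: ifP => [/modn_small -> //|a1_ge_n].
by rewrite (_ : a.+1 = n) ?modnn //; lia.
Qed.

Lemma modn_pred (n a : nat) : (a < n)%N ->
  ((a + n - 1) %% n = if a == 0 then n - 1 else a - 1)%N.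
Proof.
move=> a_lt_n; case: eqP => [->|a_neq0]; first by rewrite add0n modn_small; lia.
by rewrite (_ : (a + n - 1 = (a - 1) + n)%N) ?modnDr ?modn_small; lia.
Qed.

Section PrismAdjacency.
Variable n : nat.
Hypothesis n_gt2 : (2 < n)%N.
Let n_gt0 : (0 < n)%N. Proof. exact: leq_trans n_gt2. Qed.

Definition cyc_succ (a : 'I_n) : 'I_n := Ordinal (ltn_pmod a.+1 n_gt0).
Definition cyc_pred (a : 'I_n) : 'I_n := Ordinal (ltn_pmod (a + n - 1) n_gt0).

Lemma cycle_relE (a j : 'I_n) :
  cycle_rel n a j = (cyc_succ a == j) || (cyc_pred a == j).
Proof.
have a_lt := ltn_ord a; have j_lt := ltn_ord j.
rewrite /cycle_rel -[cyc_succ a == j]val_eqE -[cyc_pred a == j]val_eqE /=.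
congr orb; first by rewrite eq_sym.
rewrite modn_pred // modn_succ //.
by case: (ltnP j.+1 n) => ?; case: (eqVneq (a : nat) 0) => ?; apply/eqP/eqP; lia.
Qed.

(* the two cycle neighbours differ because n > 2 *)
Lemma cyc_succ_neq_pred (a : 'I_n) : cyc_succ a != cyc_pred a.
Proof.
have a_lt := ltn_ord a; rewrite -(inj_eq val_inj) /= modn_pred // modn_succ //.
by case: (ltnP a.+1 n) => ?; case: (eqVneq (a : nat) 0) => ?; apply/eqP; lia.
Qed.

Lemma prism_relE (V : pzSemiRingType) (x1 j : 'I_n) (x2 b : 'I_2) :
  ((prism_rel n (x1, x2) (j, b))%:R : V) =
  (x1 == j)%:R * (x2 != b)%:R +
  (x2 == b)%:R * ((cyc_succ x1 == j)%:R + (cyc_pred x1 == j)%:R).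
Proof.
rewrite /prism_rel /cart_rel /P2_rel /= cycle_relE natr_orb; last first.
  by case: (x2 == b); rewrite ?andbF ?andbT.
rewrite !natr_andb natr_orb //.
apply/negP => /andP[/eqP <- /eqP pred_eq_succ].
by move: (cyc_succ_neq_pred x1); rewrite pred_eq_succ eqxx.
Qed.

Lemma prism_adj_sum (V : comPzRingType) (f : 'I_n * 'I_2 -> V) (x : 'I_n * 'I_2) :
  \sum_z (prism_rel n x z)%:R * f z =
  \sum_(b < 2) (x.2 != b)%:R * f (x.1, b)
  + f (cyc_succ x.1, x.2) + f (cyc_pred x.1, x.2).
Proof.
case: x => x1 x2 /=.
have split_term j b : (prism_rel n (x1, x2) (j, b))%:R * f (j, b) =
    (x1 == j)%:R * ((x2 != b)%:R * f (j, b)) +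
    (x2 == b)%:R * (((cyc_succ x1 == j)%:R + (cyc_pred x1 == j)%:R) * f (j, b)).
  by rewrite prism_relE; ring.
have sum_b j : \sum_(b < 2) (prism_rel n (x1, x2) (j, b))%:R * f (j, b) =
    (x1 == j)%:R * \sum_(b < 2) (x2 != b)%:R * f (j, b) +
    ((cyc_succ x1 == j)%:R + (cyc_pred x1 == j)%:R) * f (j, x2).
  by rewrite (eq_bigr _ (fun b _ => split_term j b)) big_split /= -mulr_sumr sum_indicator.
rewrite sum_pairs (eq_bigr _ (fun j _ => sum_b j)) big_split /= sum_indicator -addrA.
by congr (_ + _); under eq_bigr => j _ do rewrite mulrDl; rewrite big_split /= !sum_indicator.
Qed.

Lemma prism_deg (x : 'I_n * 'I_2) : deg (prism_rel n) x = 3%N.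
Proof.
have sum_adj : \sum_z ((prism_rel n x z)%:R : rat) = 3.
  rewrite (eq_bigr (fun z => (prism_rel n x z)%:R * 1)) => [|z _]; last by rewrite mulr1.
  rewrite prism_adj_sum // !big_ord_recl big_ord0.
  by case: x => ? [[|[|//]] ?]; rewrite /= ?mulr1 ?mulr0 ?add0r ?addr0; lra.
rewrite /deg -sum1dep_card big_mkcond /=.
apply/eqP; rewrite -(eqr_nat rat) natr_sum -sum_adj.
by apply/eqP/eq_bigr => z _; case: (prism_rel n x z).
Qed.

Lemma prism_nedges : nedges (prism_rel n) = (3 * n)%N.
Proof.
rewrite /nedges -sum1dep_card big_mkcond /=.
rewrite -(pair_bigA _ (fun x y => if prism_rel n x y then 1%N else 0%N)) /=.
rewrite (eq_bigr (fun _ => 3%N)); last first.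
  by move=> x _; rewrite -(prism_deg x) /deg -sum1dep_card [RHS]big_mkcond.
by rewrite sum_nat_const card_prod !card_ord (_ : (n * 2 * 3 = 3 * n * 2)%N) ?mulnK //; lia.
Qed.

End PrismAdjacency.

Lemma sum_sign_neq (V : pzRingType) (x2 s : 'I_2) :
  \sum_(b < 2) (x2 != b)%:R * (-1) ^+ (b * s) = (-1) ^+ s * (-1) ^+ (x2 * s) :> V.
Proof.
rewrite !big_ord_recl big_ord0.
by case: x2 => [[|[|//]] ?]; case: s => [[|[|//]] ?];
  rewrite /= ?mul0r ?mulr0 ?mul1r ?mulr1 ?add0r ?addr0 ?expr0 ?expr1 ?mulrNN ?mulr1.
Qed.

Lemma sum_sign_orth (V : pzRingType) (s s' : 'I_2) :
  \sum_(b < 2) (-1) ^+ (s * b) * (-1) ^+ (b * s') = 2%:R * (s == s')%:R :> V.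
Proof.
rewrite !big_ord_recl big_ord0.
by case: s => [[|[|//]] ?]; case: s' => [[|[|//]] ?];
  rewrite /= ?mul0r ?mulr0 ?mul1r ?mulr1 ?add0r ?addr0 ?expr0 ?expr1 ?mulrNN ?mulr1 ?subrr.
Qed.

Lemma dvdn_subn_add (n : nat) (k k' : 'I_n) : (n %| n - k + k')%N = (k == k').
Proof.
have k_lt := ltn_ord k; have k'_lt := ltn_ord k'.
case: eqVneq => [<-|k_neq]; first by rewrite subnK ?dvdnn // ltnW.
apply/negP => /dvdnP [q q_eq].
have : k <> k' :> nat by move=> /val_inj; apply/eqP.
by case: q q_eq => [|[|q]] q_eq; rewrite ?mulSn in q_eq; lia.
Qed.

(** The "dual" vectors omega^(j(n-k)) (-1)^(bs)
    invert the eigenbasis matrix up to the factor 2n. *)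
Section PrismSpectrum.
Variables (R : realType) (n : nat).
Hypothesis n_gt2 : (2 < n)%N.
Let n_gt0 : (0 < n)%N. Proof. exact: leq_trans n_gt2. Qed.
Local Notation T := ('I_n * 'I_2)%type.
Local Notation omega m := (@omega R n m%N).
Local Notation angle := (angle R n).

Definition prism_eigvec (x y : T) : R[i] :=
  omega (x.1 * y.1) * (-1) ^+ (x.2 * y.2).

Definition prism_eigval (y : T) : R := 2 * cos (y.1%:R * angle) + (-1) ^+ y.2.

Definition prism_dualvec (x z : T) : R[i] :=
  omega (z.1 * (n - x.1)) * (-1) ^+ (x.2 * z.2).

Lemma prism_eigvecP (x y : T) :
  \sum_z (prism_rel n x z)%:R * prism_eigvec z y =
  (prism_eigval y)%:C%C * prism_eigvec x y.
Proof.
case: x y => [x1 x2] [k s].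
rewrite prism_adj_sum // /prism_eigvec /cyc_succ /cyc_pred /=.
under eq_bigr => b _ do rewrite mulrCA.
rewrite -mulr_sumr sum_sign_neq !omega_modl //.
have succ_k : omega (x1.+1 * k) = omega (x1 * k) * omega k by rewrite mulSn addnC omegaD.
have pred_k : omega ((x1 + n - 1) * k) = omega (x1 * k) * omega ((n - 1) * k).
  by rewrite -addnBA // mulnDl omegaD.
have conj_k : omega ((n - 1) * k) = (2 * cos (k%:R * angle))%:C%C - omega k.
  by rewrite -omega_add_conj // addrC addKr.
rewrite succ_k pred_k conj_k /prism_eigval rmorphD /= rmorphXn /= rmorphN1.
rewrite (_ : (2 * cos (k%:R * angle))%:C%C = 2 * (cos (k%:R * angle))%:C%C); last first.
  by rewrite rmorphM /= rmorph_nat.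
ring.
Qed.

Lemma prism_dualvec_orth (x y : T) :
  \sum_z prism_dualvec x z * prism_eigvec z y = (2 * n)%N%:R * (x == y)%:R.
Proof.
case: x y => [k s] [k' s']; rewrite sum_pairs /prism_dualvec /prism_eigvec /=.
have regroup (a b c d : R[i]) : (a * b) * (c * d) = (a * c) * (b * d) by ring.
under eq_bigr => j _.
  under eq_bigr => b _ do rewrite regroup -omegaD -mulnDr.
  rewrite -mulr_sumr sum_sign_orth.
  over.
rewrite /= -mulr_suml sum_omega // dvdn_subn_add xpair_eqE.
by case: (k == k'); case: (s == s'); rewrite ?mulr0 ?mul0r ?mulr1 // natrM mulrC.
Qed.

Local Notation N := #|{: T}|.

Definition prism_eigmx : 'M[R[i]]_N :=
  \matrix_(i, j) prism_eigvec (enum_val i) (enum_val j).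

Definition prism_dualmx : 'M[R[i]]_N :=
  \matrix_(i, j) prism_dualvec (enum_val i) (enum_val j).

Lemma prism_dualmx_eigmx : prism_dualmx *m prism_eigmx = ((2 * n)%N%:R)%:M.
Proof.
apply/matrixP => i j; rewrite !mxE.
under eq_bigr => k _ do rewrite !mxE.
rewrite (sum_enum_val (fun z => prism_dualvec (enum_val i) z * prism_eigvec z (enum_val j))).
by rewrite prism_dualvec_orth (inj_eq enum_val_inj) mulr_natr.
Qed.

(* the eigenbasis is invertible, its inverse being (2n)^-1 times the dual matrix *)
Lemma det_prism_eigmx : \det prism_eigmx != 0.
Proof.
apply/eqP => det0; have := congr1 determinant prism_dualmx_eigmx.
rewrite det_mulmx det0 mulr0 det_scalar => /esym/eqP.
by rewrite expf_eq0 pnatr_eq0 muln_eq0 /= => /andP[_ /eqP n0]; move: n_gt0; rewrite n0.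
Qed.

Lemma prism_adjmx_eigmx :
  map_mx (real_complex R) (adjmx R (prism_rel n)) *m prism_eigmx =
  prism_eigmx *m diag_mx (\row_j (prism_eigval (enum_val j))%:C%C).
Proof.
apply/matrixP => i j; rewrite mul_mx_diag !mxE.
under eq_bigr => k _ do rewrite !mxE rmorph_nat.
rewrite (sum_enum_val (fun z => (prism_rel n (enum_val i) z)%:R * prism_eigvec z (enum_val j))).
by rewrite prism_eigvecP mulrC.
Qed.

(* Q = 3 I + A, so the eigenbasis of A also diagonalises Q *)
Lemma prism_signlessmx_eigmx :
  map_mx (real_complex R) (signlessmx R (prism_rel n)) *m prism_eigmx =
  prism_eigmx *m diag_mx (\row_j (3 + prism_eigval (enum_val j))%:C%C).
Proof.
have degmx3 : degmx R (prism_rel n) = 3%:M.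
  by apply/matrixP => i j; rewrite !mxE (prism_deg n_gt2); case: (i == j).
rewrite /signlessmx degmx3 map_mxD mulmxDl map_scalar_mx mul_scalar_mx prism_adjmx_eigmx.
rewrite !mul_mx_diag; apply/matrixP => i j; rewrite !mxE !rmorphD !rmorph1 /=.
ring.
Qed.

Definition prism_term (c : R) : R := `|2 * c + 1| + `|2 * c - 1|.

Definition prism_energy_sum : R := \sum_(k < n) prism_term (cos (k%:R * angle)).

Lemma normc_real (x : R) : Normc.normc (x%:C%C) = `|x|.
Proof. by rewrite /Normc.normc /= expr0n addr0 sqrtr_sqr. Qed.

(* the pair of eigenvalues 2c + 1, 2c - 1 for each k gives prism_term *)
Lemma sum_abs_prism_eigval :
  \sum_(j < N) `|prism_eigval (enum_val j)| = prism_energy_sum.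
Proof.
rewrite (sum_enum_val (fun z => `|prism_eigval z|)) sum_pairs.
apply: eq_bigr => k _.
by rewrite !big_ord_recl big_ord0 /prism_eigval /= expr0 expr1 addr0.
Qed.

Lemma energy_prism : energy R (prism_rel n) = prism_energy_sum.
Proof.
rewrite /energy (sum_eigenvalues _ det_prism_eigmx prism_adjmx_eigmx).
by under eq_bigr => j _ do rewrite normc_real; exact: sum_abs_prism_eigval.
Qed.

(* the average degree 2m/N is 3, so |q - 2m/N| = |lambda| *)
Lemma QEnergy_prism : QEnergy R (prism_rel n) = prism_energy_sum.
Proof.
rewrite /QEnergy (sum_eigenvalues _ det_prism_eigmx prism_signlessmx_eigmx).
have average_deg : ((2 * nedges (prism_rel n))%N%:R / N%:R : R) = 3.
  rewrite (prism_nedges n_gt2) card_prod !card_ord (_ : (2 * (3 * n) = 3 * (n * 2))%N).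
    by rewrite natrM mulfK // pnatr_eq0 muln_eq0 negb_or -lt0n n_gt0.
  by lia.
rewrite average_deg.
under eq_bigr => j _ do rewrite -rmorphB normc_real (addrC 3) addrK.
exact: sum_abs_prism_eigval.
Qed.

End PrismSpectrum.

Section PrismTerm.
Variable R : realType.

Lemma prism_term_ge2 (c : R) : 2 <= prism_term c.
Proof.
apply: le_trans (ler_normB _ _).
by rewrite (_ : 2 * c + 1 - (2 * c - 1) = 2) ?ger0_norm //; ring.
Qed.

Lemma prism_term_le (c : R) : prism_term c <= 2 + 2 * c ^+ 2.
Proof.
rewrite /prism_term; have := sqr_ge0 (c - 1); have := sqr_ge0 (c + 1).
case: (lerP 0 (2 * c + 1)) => [/ger0_norm -> | /ltr0_norm ->];
  case: (lerP 0 (2 * c - 1)) => [/ger0_norm -> | /ltr0_norm ->]; nra.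
Qed.

Lemma prism_term1 : prism_term (1 : R) = 4.
Proof. by rewrite /prism_term mulr1 !ger0_norm; lra. Qed.

Lemma prism_termN1 : prism_term (-1 : R) = 4.
Proof. by rewrite /prism_term mulrN1 !ler0_norm; lra. Qed.

Lemma prism_term0 : prism_term (0 : R) = 2.
Proof. by rewrite /prism_term mulr0 add0r sub0r normrN normr1; lra. Qed.

End PrismTerm.

(** Upper bound: since sum_k cos^2 (2 pi k / n) = n / 2, the energy is at
    most sum_k (2 + 2 cos^2) = 3n < 3 + sqrt (3 (2n - 1) (2n - 3)). *)
Section UpperBound.
Variables (R : realType) (n : nat).
Hypothesis n_gt2 : (2 < n)%N.
Let n_gt0 : (0 < n)%N. Proof. exact: leq_trans n_gt2. Qed.
Local Notation angle := (angle R n).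

Lemma sum_cos2 : \sum_(k < n) cos (k%:R * angle) ^+ 2 = n%:R / 2.
Proof.
have sum_cos_double : \sum_(k < n) cos ((k%:R * angle) *+ 2) = 0.
  transitivity (complex.Re (\sum_(k < n) omega R n (k * 2))).
    by rewrite raddf_sum; apply: eq_bigr => k _; rewrite /omega /= natrM mulrAC mulr_natr.
  by rewrite sum_omega // ifF //; apply/negP => /dvdn_leq; lia.
have cos2E (x : R) : cos x ^+ 2 = (1 + cos (x *+ 2)) / 2.
  by rewrite cos_mulr2n -mulr_natr; field.
rewrite (eq_bigr _ (fun k _ => cos2E _)) -mulr_suml big_split /=.
by rewrite sum_cos_double addr0 sumr_const card_ord.
Qed.

Lemma prism_energy_sum_le : prism_energy_sum R n <= 3 * n%:R.
Proof.
apply: le_trans (ler_sum _ (fun k _ => prism_term_le _)) _.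
rewrite big_split /= -mulr_sumr sum_cos2 sumr_const card_ord -mulr_natr.
have : (0 : R) <= n%:R by rewrite ler0n.
lra.
Qed.

Lemma lt_sqrtr (a b : R) : 0 <= b -> b ^+ 2 < a -> b < Num.sqrt a.
Proof.
move=> b_ge0 ab; rewrite -(ger0_norm b_ge0) -sqrtr_sqr ltr_sqrt //.
by apply: le_lt_trans ab; rewrite exprn_ge0.
Qed.

Lemma prism_energy_sum_upper :
  prism_energy_sum R n < 3 + Num.sqrt (3 * (2 * n - 1)%N%:R * (2 * n - 3)%N%:R).
Proof.
apply: le_lt_trans prism_energy_sum_le _.
rewrite !natrB ?natrM; try lia.
have n_ge3 : (3 : R) <= n%:R by rewrite ler_nat.
by rewrite -ltrBlDl; apply: lt_sqrtr; nra.
Qed.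

End UpperBound.

(** Lower bound: every term is at least 2; the term k = 0 (cos = 1) is 4,
    and for even n so is the term k = n/2 (cos = -1). *)
Section EnergyLowerBound.
Variables (R : realType) (n : nat).
Hypothesis n_gt2 : (2 < n)%N.
Let n_gt0 : (0 < n)%N. Proof. exact: leq_trans n_gt2. Qed.

Lemma prism_energy_sum_ge :
  (2 * (n + 1 + ~~ odd n))%N%:R <= prism_energy_sum R n.
Proof.
pose excess (k : 'I_n) : R := prism_term (cos (k%:R * angle R n)) - 2.
have excess_ge0 k : 0 <= excess k by rewrite subr_ge0 prism_term_ge2.
have -> : prism_energy_sum R n = 2 * n%:R + \sum_k excess k.
  by rewrite /excess sumrB sumr_const card_ord mulr_natr addrC subrK.
pose k0 : 'I_n := Ordinal n_gt0.
have excess_k0 : excess k0 = 2 by rewrite /excess mul0r cos0 prism_term1; lra.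
rewrite (bigD1 k0) //= excess_k0 natrM !natrD.
case: (boolP (odd n)) => [_ | even_n] /=; rewrite ?mulr0n ?mulr1n.
  have : 0 <= \sum_(k | k != k0) excess k by apply: sumr_ge0 => k _.
  lra.
have half_lt : (n./2 < n)%N by rewrite -divn2 ltn_Pdiv.
pose k1 : 'I_n := Ordinal half_lt.
have k1_neq : k1 != k0 by rewrite -val_eqE /= -lt0n half_gt0 (ltnW n_gt2).
have excess_k1 : excess k1 = 2.
  rewrite /excess /angle /= (_ : _ * _ = pi); first by rewrite cospi prism_termN1; lra.
  rewrite -{2}(odd_double_half n) (negbTE even_n) add0n -muln2 natrM.
  by field; rewrite pnatr_eq0 -lt0n half_gt0 (ltnW n_gt2).
rewrite (bigD1 k1) //= excess_k1.
have : 0 <= \sum_(k | (k != k0) && (k != k1)) excess k by apply: sumr_ge0 => k _.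
lra.
Qed.

End EnergyLowerBound.

Section CosineValues.
Variable R : realType.

Lemma cos_frac_antitone (p q m n : nat) : (0 < q)%N -> (0 < n)%N ->
  (p * n <= m * q)%N -> (2 * m <= n)%N ->
  cos (2 * pi * m%:R / n%:R : R) <= cos (2 * pi * p%:R / q%:R).
Proof.
move=> q_gt0 n_gt0 pn_le_mq m2_le_n.
have q0 : (0 : R) < q%:R by rewrite ltr0n.
have n0 : (0 : R) < n%:R by rewrite ltr0n.
have p0 := @pi_gt0 R.
apply: cos_antitone.
- by rewrite !mulr_ge0 ?invr_ge0 ?ler0n ?pi_ge0.
- rewrite -[2 * pi * p%:R / q%:R]mulrA -[2 * pi * m%:R / n%:R]mulrA.
  apply: ler_wpM2l; first lra.
  by rewrite ler_pdivrMr // mulrAC ler_pdivlMr // -!natrM ler_nat.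
- rewrite ler_pdivrMr //.
  have : ((2 * m)%N%:R : R) <= n%:R by rewrite ler_nat.
  rewrite natrM; nra.
Qed.

(* c = cos (2pi/7) is a root of 8c^3 + 4c^2 - 4c - 1, whose largest root is
   below 13/20, because cos (4b) = cos (3b) for b = 2pi/7 *)
Lemma cos_2pi7_le : cos (2 * pi / 7 : R) <= 13 / 20.
Proof.
set b : R := 2 * pi / 7; have p0 := @pi_gt0 R.
have := cos_2piB (b *+ 3); rewrite (_ : pi *+ 2 - b *+ 3 = b *+ 4); last by rewrite /b; field.
rewrite cos4x cos3x => cos_eq.
have c_lt1 : cos b < 1 by apply: cos_lt1; rewrite /b; lra.
set c := cos b in cos_eq c_lt1 *.
have factored : (c - 1) * (8 * c ^+ 3 + 4 * c ^+ 2 - 4 * c - 1) = 0 by nra.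
have cubic : 8 * c ^+ 3 + 4 * c ^+ 2 - 4 * c - 1 = 0.
  by move/eqP: factored; rewrite mulf_eq0 => /orP[/eqP|/eqP //]; lra.
by rewrite leNgt; apply/negP => c_gt; nra.
Qed.

(* cos (pi/4)^2 = 1/2, by the double angle formula and cos (pi/2) = 0 *)
Lemma cos_pi4 : cos (pi / 4 : R) ^+ 2 = 1 / 2 /\ 0 < cos (pi / 4 : R).
Proof.
have p0 := @pi_gt0 R.
split; last by apply: cos_gt0_pihalf; apply/andP; split; lra.
have := cos_mulr2n (pi / 4 : R).
by rewrite (_ : (pi / 4) *+ 2 = pi / 2) ?cos_pihalf; [lra | field].
Qed.

(* from cos (3pi/4) = - cos (pi/4) by the double angle formula *)
Lemma cos_3pi8_ge : 7 / 20 <= cos (3 * pi / 8 : R).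
Proof.
have p0 := @pi_gt0 R.
have [s2 s_gt0] := cos_pi4.
have c_ge0 : 0 <= cos (3 * pi / 8 : R).
  by apply: cos_ge0_pihalf; apply/andP; split; lra.
have := cos_mulr2n (3 * pi / 8 : R).
rewrite (_ : (3 * pi / 8) *+ 2 = pi - pi / 4); last by field.
rewrite cosB cospi sinpi mul0r addr0 => double.
set c := cos _ in c_ge0 double *; set s := cos _ in s2 s_gt0 double.
nra.
Qed.

(* c = cos (2pi/5) satisfies 4c^2 + 2c = 1, from cos (3b) = cos (2b) *)
Lemma cos_2pi5 : 0 < cos (2 * pi / 5 : R) /\
  4 * cos (2 * pi / 5 : R) ^+ 2 + 2 * cos (2 * pi / 5 : R) = 1.
Proof.
set b : R := 2 * pi / 5; have p0 := @pi_gt0 R.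
have := cos_2piB (b *+ 2); rewrite (_ : pi *+ 2 - b *+ 2 = b *+ 3); last by rewrite /b; field.
rewrite cos3x cos_mulr2n => cos_eq.
have c_lt1 : cos b < 1 by apply: cos_lt1; rewrite /b; lra.
have c_gt0 : 0 < cos b by apply: cos_gt0_pihalf; apply/andP; split; rewrite /b; lra.
split => //; set c := cos b in cos_eq c_lt1 c_gt0 *.
have factored : (c - 1) * (4 * c ^+ 2 + 2 * c - 1) = 0 by nra.
by move/eqP: factored; rewrite mulf_eq0 => /orP[/eqP|/eqP]; lra.
Qed.

End CosineValues.

(** Comparison of the trigonometric lower bound L_n with 2n: the ratios
    sqrt (2c - 1) / (1 + c) and sqrt (1 - 2c) / (2 - c) are at most 1/3 for
    the relevant c, so L_n <= 2n, except for n in {4, 5, 8, 10}. *)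
Section LowerBoundComparison.
Variable R : realType.

Lemma sqrtr_div_le (a b q : R) :
  0 < b -> 0 <= q -> a <= (q * b) ^+ 2 -> Num.sqrt a / b <= q.
Proof.
move=> b_gt0 q_ge0 a_le; rewrite ler_pdivrMr //.
have qb_ge0 : 0 <= q * b by rewrite mulr_ge0 // ltW.
by rewrite -(ger0_norm qb_ge0) -sqrtr_sqr ler_sqrt // exprn_ge0.
Qed.

Lemma sqrtr_div_lt (a b q : R) :
  0 < b -> 0 < q -> a < (q * b) ^+ 2 -> Num.sqrt a / b < q.
Proof.
move=> b_gt0 q_gt0 a_lt; rewrite ltr_pdivrMr //.
have qb_gt0 : 0 < q * b by rewrite mulr_gt0.
by rewrite -(gtr0_norm qb_gt0) -sqrtr_sqr ltr_sqrt // exprn_gt0.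
Qed.

Lemma ratio12_le (c : R) :
  c <= 13 / 20 -> Num.sqrt (2 * c - 1) / (1 + c) <= 1 / 3.
Proof.
move=> c_le; case: (lerP (2 * c - 1) 0) => [neg|pos].
  by rewrite ler0_sqrtr // mul0r; lra.
by apply: sqrtr_div_le; [lra | lra | nra].
Qed.

Lemma ratio45_le (c : R) : 7 / 20 <= c <= 1 ->
  Num.sqrt (1 - 2 * c) / (2 - c) <= 1 / 3.
Proof.
move=> /andP[c_ge c_le1]; case: (lerP (1 - 2 * c) 0) => [neg|pos].
  by rewrite ler0_sqrtr // mul0r; lra.
by apply: sqrtr_div_le; [lra | lra | nra].
Qed.

Lemma ratio12_at_pi4 (s : R) : s ^+ 2 = 1 / 2 -> 0 < s ->
  Num.sqrt (2 * s - 1) / (1 + s) < 5 / 12.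
Proof. by move=> s2 s_gt0; apply: sqrtr_div_lt; [lra | lra | nra]. Qed.

Lemma ratio45_at_2pi5 (c : R) : 0 < c -> 4 * c ^+ 2 + 2 * c = 1 ->
  Num.sqrt (1 - 2 * c) / (2 - c) < 2 / 5.
Proof.
move=> c_gt0 c_eq; have c_gt : 1 / 4 < c by nra.
case: (lerP (1 - 2 * c) 0) => [neg|pos].
  by rewrite ler0_sqrtr // mul0r; lra.
by apply: sqrtr_div_lt; [lra | lra | nra].
Qed.

Lemma mul_6n_le (n : nat) (x : R) :
  x <= 1 / 3 -> (6 * n)%N%:R * x <= (2 * n)%N%:R.
Proof.
move=> x_le; have n_ge0 : (0 : R) <= n%:R by rewrite ler0n.
rewrite !natrM; nra.
Qed.

Lemma lower_bound_mod3 (n : nat) :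
  (n %% 3 == 0)%N -> prism_lower_bound R n = (2 * n)%N%:R.
Proof. by rewrite /prism_lower_bound => ->. Qed.

(* n = 6m + 1 or 6m + 2 with n <= 7m, hence 2 pi m / n >= 2 pi / 7 *)
Lemma lower_bound_mod12 (n : nat) : (2 < n)%N -> (n %% 3 != 0)%N ->
  (n %% 6 == 1)%N || (n %% 6 == 2)%N -> n != 8 ->
  prism_lower_bound R n <= (2 * n)%N%:R.
Proof.
move=> n_gt2 n_mod3 n_mod6 n_neq8.
rewrite /prism_lower_bound (negbTE n_mod3) n_mod6 /=; set m := (n %/ 6)%N.
have := @cos_frac_antitone R 1 7 m n isT (ltnW (ltnW n_gt2)) ltac:(lia) ltac:(lia).
rewrite mulr1n mulr1 => cos_le.
exact/mul_6n_le/ratio12_le/(le_trans cos_le)/cos_2pi7_le.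
Qed.

(* the exceptions n = 8, 5, 10 compare L_n with 2n + 4, 2n + 2, 2n + 4 *)
Lemma lower_bound_8 : prism_lower_bound R 8 < 20.
Proof.
rewrite /prism_lower_bound /= (_ : 2 * pi * 1%:R / 8%:R = pi / 4 :> R); last first.
  by rewrite mulr1n mulr1; field.
have [s2 s_gt0] := @cos_pi4 R.
have := ratio12_at_pi4 s2 s_gt0; rewrite (_ : (6 * 8)%N%:R = 48 :> R) //.
lra.
Qed.

(* n = 6m - 2 or 6m - 1 with 16m <= 3n, hence 2 pi m / n <= 3 pi / 8 *)
Lemma lower_bound_mod45 (n : nat) : (2 < n)%N -> (n %% 3 != 0)%N ->
  ~~ ((n %% 6 == 1)%N || (n %% 6 == 2)%N) -> n != 4 -> n != 5 -> n != 10 ->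
  prism_lower_bound R n <= (2 * n)%N%:R.
Proof.
move=> n_gt2 n_mod3 n_mod6 n_neq4 n_neq5 n_neq10.
rewrite /prism_lower_bound (negbTE n_mod3) (negbTE n_mod6); set m := ((n + 5) %/ 6)%N.
have := @cos_frac_antitone R m n 3 16 (ltnW (ltnW n_gt2)) isT ltac:(lia) isT.
rewrite (_ : 2 * pi * 3%:R / 16%:R = 3 * pi / 8 :> R); last by field.
move=> /(le_trans (cos_3pi8_ge R)) cos_ge.
by apply/mul_6n_le/ratio45_le; rewrite cos_ge cos_le1.
Qed.

Lemma lower_bound_5 : prism_lower_bound R 5 < 12.
Proof.
rewrite /prism_lower_bound /= (_ : 2 * pi * 1%:R / 5%:R = 2 * pi / 5 :> R); last first.
  by rewrite mulr1n mulr1.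
have [c_gt0 c_eq] := @cos_2pi5 R.
have := ratio45_at_2pi5 c_gt0 c_eq; rewrite (_ : (6 * 5)%N%:R = 30 :> R) //.
lra.
Qed.

Lemma lower_bound_10 : prism_lower_bound R 10 < 24.
Proof.
rewrite /prism_lower_bound /= (_ : 2 * pi * 2%:R / 10%:R = 2 * pi / 5 :> R); last by field.
have [c_gt0 c_eq] := @cos_2pi5 R.
have := ratio45_at_2pi5 c_gt0 c_eq; rewrite (_ : (6 * 10)%N%:R = 60 :> R) //.
lra.
Qed.

(* L_n is below the lower estimate 2n + 2 (+ 2 for even n) of the energy *)
Lemma prism_lower_bound_lt (n : nat) : (2 < n)%N -> n != 4 ->
  prism_lower_bound R n < (2 * (n + 1 + ~~ odd n))%N%:R.
Proof.
move=> n_gt2 n_neq4.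
have lt_2n (x : R) : x <= (2 * n)%N%:R -> x < (2 * (n + 1 + ~~ odd n))%N%:R.
  by move=> /le_lt_trans; apply; rewrite ltr_nat; lia.
have [n_mod3|n_mod3] := eqVneq (n %% 3)%N 0.
  by apply: lt_2n; rewrite lower_bound_mod3 ?n_mod3.
have [n_mod6|n_mod6] := boolP ((n %% 6 == 1)%N || (n %% 6 == 2)%N).
  have [->|n_neq8] := eqVneq n 8; first exact: lower_bound_8.
  exact/lt_2n/lower_bound_mod12.
have [->|n_neq5] := eqVneq n 5; first exact: lower_bound_5.
have [->|n_neq10] := eqVneq n 10; first exact: lower_bound_10.
exact/lt_2n/lower_bound_mod45.
Qed.

End LowerBoundComparison.

(** The equality case n = 4: the cosines are 1, 0, -1, 0, so E = 4 + 2 + 4 + 2,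
    and L_4 = 24 sqrt (1 - 2 cos (pi/2)) / (2 - cos (pi/2)) = 12. *)
Section PrismFour.
Variable R : realType.

Lemma prism_energy_sum_4 : prism_energy_sum R 4 = 12.
Proof.
have p0 := @pi_gt0 R.
rewrite /prism_energy_sum /angle !big_ord_recl big_ord0 /= /bump /= mul0r.
rewrite (_ : 1%:R * (2 * pi / 4) = pi / 2 :> R); last by field.
rewrite (_ : 2%:R * (2 * pi / 4) = pi :> R); last by field.
rewrite (_ : 3%:R * (2 * pi / 4) = pi / 2 + pi :> R); last by field.
rewrite cosDpi cos_pihalf cospi cos0 oppr0 prism_term1 prism_termN1 prism_term0.
lra.
Qed.

Lemma prism_lower_bound_4 : prism_lower_bound R 4 = 12.
Proof.
rewrite /prism_lower_bound /= (_ : 2 * pi * 1%:R / 4%:R = pi / 2 :> R); last first.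
  by rewrite mulr1n mulr1; field.
by rewrite cos_pihalf mulr0 !subr0 sqrtr1; lra.
Qed.

End PrismFour.

Theorem mainTheorem18 (R : realType) (n : nat) (hn : (3 <= n)%N) :
  energy R (prism_rel n) <
    3 + Num.sqrt (3 * (2 * n - 1)%N%:R * (2 * n - 3)%N%:R)
  /\ energy R (prism_rel n) = QEnergy R (prism_rel n)
  /\ prism_lower_bound R n <= energy R (prism_rel n)
  /\ (energy R (prism_rel n) = prism_lower_bound R n <-> n = 4%N).
Proof.
rewrite energy_prism // QEnergy_prism //.
split; first exact: prism_energy_sum_upper.
split => //.
have [->|n_neq4] := eqVneq n 4.
  by rewrite prism_energy_sum_4 prism_lower_bound_4.
have lt_energy := lt_le_trans (prism_lower_bound_lt R hn n_neq4)
  (prism_energy_sum_ge R hn).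
split; first exact: ltW.
split => [energy_eq | n_eq4]; last by rewrite n_eq4 eqxx in n_neq4.
by rewrite energy_eq ltxx in lt_energy.
Qed.
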